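(* For integers $0\le s\le n$, \[ \operatorname{Cat}_{(2n+1-s,s)}=\sum_{i=0}^s \operatorname{Mot}_{(i+n-s,\,n-s)}\binom{n}{s-i},\qquad \operatorname{Cat}_{(2n-s,s)}=\sum_{i=0}^s \operatorname{Rior}_{(i+n-s,\,n-s)}\binom{n}{s-i}. \]
   Context: The Catalan triangle numbers are $\operatorname{Cat}_{(a,b)}=\binom{a+b}{b}-\binom{a+b}{b-1}$ for $0\le b\le a$ and $0$ otherwise. A Motzkin path is a lattice path with steps $U=(1,1)$, $H=(1,0)$, $D=(1,-1)$ starting at $(0,0)$ and staying weakly above the line $y=0$. The Motzkin triangle number $\operatorname{Mot}_{(a,k)}$ is the number of Motzkin paths from $(0,0)$ to $(a,k)$ (so $\operatorname{Mot}_{(a,a)}=1$ and $\operatorname{Mot}_{(a,0)}$ is the $a$-th Motzkin number). The Riordan triangle number $\operatorname{Rior}_{(a,k)}$ is the number of Motzkin paths from $(0,0)$ to $(a,k)$ having no $H$ step on the line $y=0$ (so $\operatorname{Rior}_{(a,a)}=1$, $\operatorname{Rior}_{(1,0)}=0$). *)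

From HB Require Import structures.
From mathcomp Require Import all_boot all_order all_algebra.
Set Implicit Arguments. Unset Strict Implicit. Unset Printing Implicit Defensive.
Import GRing.Theory Num.Theory.
Local Open Scope ring_scope.

(* Catalan triangle: Cat_(a,b) = C(a+b,b) - C(a+b,b-1) for 0 <= b <= a, 0 otherwise,
   with the convention C(m,-1) = 0.  Valued in int to avoid truncated subtraction. *)
Definition Cat (a b : nat) : int :=
  if (b <= a)%N then
    match b with
    | 0 => 1
    | b'.+1 => ('C(a + b, b))%:Z - ('C(a + b, b'))%:Z
    end
  else 0.

(* Steps of a Motzkin path, encoded in 'I_3:  0 = U = (1,1),  1 = H = (1,0),
   2 = D = (1,-1). *)
Definition stepU : nat := 0.
Definition stepH : nat := 1.
Definition stepD : nat := 2.

(* [mpath noH0 h s k]: the step sequence s, started at height h, stays weakly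
   above y = 0 and ends at height k; if noH0 is true, moreover no H step is
   taken on the line y = 0. *)
Fixpoint mpath (noH0 : bool) (h : nat) (s : seq 'I_3) (k : nat) : bool :=
  match s with
  | [::] => h == k
  | x :: s' =>
      if val x == stepU then mpath noH0 h.+1 s' k
      else if val x == stepH then (~~ noH0 || (h != 0)%N) && mpath noH0 h s' k
      else (h != 0)%N && mpath noH0 h.-1 s' k
  end.

Definition Mot (a k : nat) : nat :=
  #|[set p : a.-tuple 'I_3 | mpath false 0 p k]|.

Definition Rior (a k : nat) : nat :=
  #|[set p : a.-tuple 'I_3 | mpath true 0 p k]|.

(* Let B_n(k) = sum_m C(n, m) P_m(k), where P_m(k) counts the Motzkin (resp.
   Riordan) paths of length m ending at height k.  Pascal's rule together with
   splitting off the last step of a path gives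
     B_(n+1)(k) = B_n(k-1) + (1 + c_k) B_n(k) + B_n(k+1),
   with c_k = 1, except c_0 = 0 for Riordan paths.  The ballot numbers
   C(2n+e, n-k) - C(2n+e, n-k-1), with e = 1 (resp. e = 0), satisfy this
   recurrence with c_k = 1 for every integer k; by the symmetry
   C(N, j) = C(N, N-j) their value at k = -1 is 0 (resp. minus the value at
   k = 0), which accounts for c_0.  Hence B_n(k) is this ballot number.  The sums
   of the statement are B_n(n-s) reindexed by m = i + n - s (shorter paths cannot
   reach height n - s), and Cat_(a,b) is the ballot number C(a+b, b) - C(a+b, b-1). *)

From HB Require Import structures.
From mathcomp Require Import all_boot all_order all_algebra.
From mathcomp Require Import zify ring.
Import GRing.Theory Num.Theory.

Lemma card_tuple_cons (T : finType) m (P : pred (m.+1.-tuple T)) :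
  #|[set t | P t]| = \sum_(x : T) #|[set t : m.-tuple T | P [tuple of x :: t]]|.
Proof.
rewrite -sum1dep_card (partition_big (@thead _ _) predT) //=.
apply: eq_bigr => x _; rewrite -sum1dep_card.
rewrite (reindex (fun t : m.-tuple T => [tuple of x :: t])) /=; last first.
  exists (fun t : m.+1.-tuple T => [tuple of behead t]) => [t _ | t /andP[_ /eqP <-]].
    exact: val_inj.
  by rewrite -tuple_eta.
by apply: eq_bigl => t; rewrite theadE eqxx andbT.
Qed.

Section PathCounting.
Variable noH0 : bool.

Fixpoint npaths (h m k : nat) : nat :=
  if m is m'.+1 then
    npaths h.+1 m' k + (if ~~ noH0 || (h != 0) then npaths h m' k else 0)
    + (if h != 0 then npaths h.-1 m' k else 0)
  else h == k.

Lemma card_mpath h m k :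
  #|[set p : m.-tuple 'I_3 | mpath noH0 h p k]| = npaths h m k.
Proof.
elim: m h => [|m IHm] h.
  have -> : [set p : 0.-tuple 'I_3 | mpath noH0 h p k] = if h == k then setT else set0.
    by apply/setP => p; rewrite tuple0 inE /=; case: (h == k); rewrite inE.
  by rewrite /=; case: eqP; rewrite ?cardsT ?card_tuple ?cards0.
rewrite card_tuple_cons !big_ord_recl big_ord0 addn0 /= -!IHm addnA.
by case: (~~ noH0 || (h != 0)); case: (h != 0); rewrite /= ?cards0 ?addn0.
Qed.

Lemma npathsS h m k :
  npaths h m.+1 k = npaths h.+1 m k + (if ~~ noH0 || (h != 0) then npaths h m k else 0)
    + (if h != 0 then npaths h.-1 m k else 0).
Proof. by []. Qed.

Lemma npaths_last h m k :
  npaths h m.+1 k = (k != 0) * npaths h m k.-1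
    + (~~ noH0 || (k != 0)) * npaths h m k + npaths h m k.+1.
Proof.
elim: m h k => [|m IHm] h k.
  rewrite /=; case: noH0; case: h => [|h]; case: k => [|[|k]] /=;
    by rewrite ?eqSS; do ? case: eqP; lia.
rewrite !(npathsS h m) [LHS]npathsS !IHm.
by case: noH0; case: h => [|h]; case: k => [|k] /=; lia.
Qed.

Lemma npaths_eq0 h m k : (h + m < k)%N -> npaths h m k = 0.
Proof.
elim: m h => [|m IHm] h /=; first by rewrite addn0 => /ltn_eqF ->.
by move=> hmk; rewrite !IHm ?if_same //; lia.
Qed.

Definition binpaths n k := \sum_(m < n.+1) 'C(n, m) * npaths 0 m k.

Lemma binpaths0 k : binpaths 0 k = (0 == k).
Proof. by rewrite /binpaths big_ord1 bin0 mul1n. Qed.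

Lemma binpaths_pascal n k :
  binpaths n.+1 k = binpaths n k + \sum_(m < n.+1) 'C(n, m) * npaths 0 m.+1 k.
Proof.
have -> : binpaths n k = \sum_(m < n.+2) 'C(n, m) * npaths 0 m k.
  by rewrite big_ord_recr /= bin_small // mul0n addn0.
rewrite /binpaths !(big_ord_recl n.+1) !bin0 -addnA -big_split /=; congr (_ + _).
by apply: eq_bigr => i _; rewrite binS mulnDl.
Qed.

Lemma binpathsS n k :
  binpaths n.+1 k = binpaths n k + ((k != 0) * binpaths n k.-1
    + (~~ noH0 || (k != 0)) * binpaths n k + binpaths n k.+1).
Proof.
rewrite binpaths_pascal; congr (_ + _).
under eq_bigr do rewrite npaths_last !mulnDr !(mulnCA 'C(n, _)).
by rewrite !big_split -!big_distrr.
Qed.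

Lemma binpaths_sum_shift k s :
  \sum_(i < s.+1) npaths 0 (i + k) k * 'C(k + s, s - i) = binpaths (k + s) k.
Proof.
rewrite /binpaths -addnS big_split_ord /= [X in _ = X + _]big1 ?add0n => [|m _].
  apply: eq_bigr => i _; have lt_is := ltn_ord i.
  rewrite mulnC (addnC k i) -bin_sub; last by lia.
  by congr ('C(_, _) * _); lia.
by rewrite npaths_eq0 ?muln0 // add0n.
Qed.

End PathCounting.

Local Open Scope ring_scope.

Definition binz (N : nat) (j : int) : int := if j is Posz i then 'C(N, i)%:Z else 0.

Lemma binz_lt0 N j : j < 0 -> binz N j = 0.
Proof. by case: j. Qed.

Lemma binzS N j : binz N.+1 j = binz N j + binz N (j - 1).
Proof.
case: j => [[|i]|i].
- by rewrite /= !bin0 addr0.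
- have -> : Posz i.+1 - 1 = Posz i by lia.
  by rewrite /= binS PoszD addrC.
- by rewrite !binz_lt0 ?addr0 //; lia.
Qed.

Lemma binz_sym N j : binz N (N%:Z - j) = binz N j.
Proof.
case: j => [i|i].
  have [le_iN | lt_Ni] := leqP i N.
    by rewrite subzn //= bin_sub.
  by rewrite binz_lt0 /= ?bin_small //; lia.
have -> : N%:Z - Negz i = (N + i.+1)%N by lia.
by rewrite /= bin_small //; lia.
Qed.

Definition ballot (N : nat) (j : int) : int := binz N j - binz N (j - 1).

Lemma ballotSS N j :
  ballot N.+2 (j + 1) = ballot N (j - 1) + 2 * ballot N j + ballot N (j + 1).
Proof. by rewrite /ballot !binzS addrK; ring. Qed.

Lemma ballot_sym N j : ballot N (N.+1%:Z - j) = - ballot N j.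
Proof.
rewrite /ballot -(binz_sym N j) -(binz_sym N (j - 1)).
have -> : N.+1%:Z - j - 1 = N%:Z - j by lia.
have -> : N%:Z - (j - 1) = N.+1%:Z - j by lia.
by rewrite opprB.
Qed.

Lemma Cat_ballot a b : (b <= a)%N -> Cat a b = ballot (a + b) b.
Proof.
move=> le_ba; rewrite /Cat /ballot le_ba; case: b {le_ba} => [|b].
  by rewrite /= bin0.
by rewrite (_ : b.+1%:Z - 1 = b) //; lia.
Qed.

Lemma ballot_mid n (e : bool) :
  ballot (2 * n + e) n.+1 = (e%:Z - 1) * ballot (2 * n + e) n.
Proof.
case: e => /=.
  have := ballot_sym (2 * n + 1) n.+1.
  have -> : (2 * n + 1).+1%:Z - n.+1%:Z = n.+1 by lia.
  lia.
have := ballot_sym (2 * n + 0) n.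
have -> : (2 * n + 0).+1%:Z - n%:Z = n.+1 by lia.
lia.
Qed.

Lemma binpaths_ballot noH0 n k :
  (binpaths noH0 n k)%:Z = ballot (2 * n + ~~ noH0) (n%:Z - k%:Z).
Proof.
elim: n k => [|n IHn] k.
  rewrite binpaths0; case: k => [|k] /=; first by rewrite /ballot /= bin0.
  by rewrite /ballot !binz_lt0 //; lia.
rewrite binpathsS !PoszD !PoszM !IHn.
have -> : (2 * n.+1 + ~~ noH0 = (2 * n + ~~ noH0).+2)%N by lia.
have -> : n.+1%:Z - k%:Z = (n%:Z - k%:Z) + 1 by lia.
rewrite ballotSS; case: k => [|k] /=.
  rewrite subr0 orbF (_ : n%:Z + 1 = n.+1) ?ballot_mid; last by lia.
  by case: (~~ noH0) => /=; ring.
rewrite orbT (_ : n%:Z - k.+1%:Z - 1 = n%:Z - k.+2%:Z); last by lia.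
rewrite (_ : n%:Z - k.+1%:Z + 1 = n%:Z - k%:Z); last by lia.
lia.
Qed.

Lemma sum_paths_ballot noH0 k s :
  \sum_(i < s.+1)
      (#|[set p : (i + k).-tuple 'I_3 | mpath noH0 0 p k]|)%:Z * ('C(k + s, s - i))%:Z
    = ballot (2 * (k + s) + ~~ noH0) s.
Proof.
under eq_bigr do rewrite card_mpath -PoszM -natz.
rewrite -natr_sum natz binpaths_sum_shift binpaths_ballot.
by congr ballot; lia.
Qed.

Theorem proposition5p15 (n s : nat) (hsn : (s <= n)%N) :
  Cat (2 * n + 1 - s) s =
    \sum_(i < s.+1) (Mot (i + n - s) (n - s))%:Z * ('C(n, s - i))%:Z
  /\
  Cat (2 * n - s) s =
    \sum_(i < s.+1) (Rior (i + n - s) (n - s))%:Z * ('C(n, s - i))%:Z.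
Proof.
have [k ->] : exists k, (n = k + s)%N by exists (n - s)%N; rewrite subnK.
rewrite addnK /Mot /Rior.
split; under eq_bigr do rewrite addnA addnK.
all: by rewrite sum_paths_ballot Cat_ballot; [congr ballot | ]; lia.
Qed.
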